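(* Let $k_E/k_F$ be an extension of finite fields, $\psi$ a nontrivial additive character of $k_F$, and $n,m\ge0$ integers. Let $a,b\in k_F^\times$ and $c\in\mathbb{C}^\times$. If $\mathrm{Kl}^{n,m}_{ta}(\psi;k_E/k_F)=c\cdot\mathrm{Kl}^{n,m}_{tb}(\psi;k_E/k_F)$ for every $t\in k_F^\times$, then $c=1$ and $a=b$.
   Context: $\mathrm{Nr},\mathrm{Tr}$ are the norm and trace of $k_E/k_F$. For $a\in k_F^\times$, $\mathrm{Kl}^{n,m}_a(\psi;k_E/k_F)=\sum\psi\circ\mathrm{Tr}(t_1+\cdots+t_n)\cdot\psi(s_1+\cdots+s_m)$, the sum over $t_1,\ldots,t_n\in k_E$ and $s_1,\ldots,s_m\in k_F$ with $\mathrm{Nr}(t_1)\cdots\mathrm{Nr}(t_n)s_1\cdots s_m=a$. *)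

From HB Require Import structures.
From mathcomp Require Import all_boot all_order all_algebra all_field.
Set Implicit Arguments. Unset Strict Implicit. Unset Printing Implicit Defensive.
Import Order.TTheory GRing.Theory Num.Theory.
Local Open Scope ring_scope.

(* A finite field extension k_E/k_F is given by finite fields F, E and a
   (necessarily injective) field embedding iota : F -> E. *)
Section KlDefs.
Variables (F E : finFieldType) (iota : {rmorphism F -> E}).

(* degree [k_E : k_F]: #|k_E| = #|k_F| ^ deg *)
Definition ext_deg : nat := trunc_log #|F| #|E|.

(* trace and norm inside E, as sum / product of the Galois conjugates
   x^(q^i), 0 <= i < [k_E:k_F], q = #|k_F| (Gal(k_E/k_F) generated by Frobenius) *)
Definition trE (x : E) : E := \sum_(i < ext_deg) x ^+ (#|F| ^ i).
Definition nrE (x : E) : E := \prod_(i < ext_deg) x ^+ (#|F| ^ i).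

Definition lowerF (y : E) : F := odflt 0 [pick x : F | iota x == y].

Definition Tr (x : E) : F := lowerF (trE x).
Definition Nr (x : E) : F := lowerF (nrE x).

Definition add_char (C : numClosedFieldType) (psi : F -> C) : Prop :=
  (forall x y, psi (x + y) = psi x * psi y) /\ (forall x, psi x != 0).
Definition nontrivial_char (C : numClosedFieldType) (psi : F -> C) : Prop :=
  exists x, psi x != 1.

Definition Kl (C : numClosedFieldType) (n m : nat) (psi : F -> C) (a : F) : C :=
  \sum_(t : {ffun 'I_n -> E})
   \sum_(s : {ffun 'I_m -> F} |
          (\prod_(i < n) Nr (t i)) * (\prod_(j < m) s j) == a)
     psi (Tr (\sum_(i < n) t i)) * psi (\sum_(j < m) s j).
End KlDefs.

(* Work in the convolution algebra of functions F -> C, (f * g) z = sum_{xy = z} f x g y.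
   Writing g_E y = sum_{Nr t = y} psi (Tr t) and g_F = psi, the Kloosterman sum is
   Kl^{n,m} = g_E^{*n} * g_F^{*m}, the pushforward of a product of characters.
   The augmentation aug f = sum_{y <> 0} f y is multiplicative and aug g = -1 for both
   factors, so summing the hypothesis over t gives (-1)^(n+m) = c (-1)^(n+m), i.e. c = 1.
   Each factor g, pushed forward from an additive character chi of L along a
   multiplicative N, is cancellable on nonzero arguments: with h the pushforward of
   x |-> chi (- x^-1) and nu that of the indicator of L^x, one has g * h = Q delta_1 - nu
   and nu * nu = (Q - 1) nu (Q = #|L|), so g * u = 0 forces Q u = nu * u and then
   nu * u = 0.  Convolution commutes with the dilations u |-> u (. * a), hence
   Kl(. * a) = Kl(. * b) descends to delta_1(. * a) = delta_1(. * b), i.e. a = b. *)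

From HB Require Import structures.
From mathcomp Require Import all_boot all_order all_algebra all_field.
From mathcomp Require Import ring.
Import Order.TTheory GRing.Theory Num.Theory.
Local Open Scope ring_scope.

Set Implicit Arguments. Unset Strict Implicit. Unset Printing Implicit Defensive.

Section Pushforward.
Variable C : comRingType.

Definition push (I K : finType) (N : I -> K) (G : I -> C) (y : K) : C :=
  \sum_(i | N i == y) G i.

Lemma eq_push (I K : finType) (N1 N2 : I -> K) (G1 G2 : I -> C) :
  N1 =1 N2 -> G1 =1 G2 -> push N1 G1 =1 push N2 G2.
Proof. by move=> eN eG y; apply: eq_big => [i|i _]; rewrite ?eN ?eG. Qed.

Lemma push_id (K : finType) (G : K -> C) : push id G =1 G.
Proof. by move=> y; rewrite /push big_pred1_eq. Qed.

Lemma sum_push (I K : finType) (N : I -> K) (G : I -> C) (P : pred K) :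
  \sum_(y | P y) push N G y = \sum_(i | P (N i)) G i.
Proof.
rewrite (partition_big N P) //; apply: eq_bigr => k Pk; apply: eq_bigl => i.
by case: eqP => [->|]; rewrite ?Pk ?andbF.
Qed.

Lemma push_comp (I K K' : finType) (N : I -> K) (M : K -> K') (G : I -> C) :
  push M (push N G) =1 push (M \o N) G.
Proof. by move=> y; rewrite /push sum_push. Qed.

Lemma push_reindex (I J K : finType) (h : J -> I) (N : I -> K) (G : I -> C) :
  bijective h -> push (N \o h) (G \o h) =1 push N G.
Proof. by move=> hbij y; rewrite /push (reindex h) //; apply: onW_bij. Qed.

Lemma push_can (K : finType) (N N' : K -> K) (G : K -> C) :
  cancel N N' -> cancel N' N -> push N G =1 G \o N'.
Proof.
move=> NK N'K y; rewrite -(push_reindex N G (Bijective N'K NK)).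
by rewrite (eq_push (N2 := id) (G2 := G \o N')) ?push_id // => x /=; rewrite N'K.
Qed.

Lemma push_pair (I J K1 K2 : finType) (N1 : I -> K1) (N2 : J -> K2)
    (G1 : I -> C) (G2 : J -> C) (y1 : K1) (y2 : K2) :
  push (fun p : I * J => (N1 p.1, N2 p.2)) (fun p => G1 p.1 * G2 p.2) (y1, y2)
  = push N1 G1 y1 * push N2 G2 y2.
Proof.
rewrite /push big_distrlr pair_big_dep /=.
by apply: eq_bigl => -[i j]; rewrite xpair_eqE.
Qed.

Lemma pushB (I K : finType) (N : I -> K) (G H : I -> C) :
  push N (fun i => G i - H i) =1 (fun y => push N G y - push N H y).
Proof. by move=> y; rewrite /push sumrB. Qed.

Lemma pushZ (I K : finType) (N : I -> K) (k : C) (G : I -> C) :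
  push N (fun i => k * G i) =1 (fun y => k * push N G y).
Proof. by move=> y; rewrite /push mulr_sumr. Qed.

End Pushforward.

Section MulConvolution.
Variables (F : finFieldType) (C : comRingType).
Implicit Types f g h : F -> C.

Definition conv f g : F -> C :=
  push (fun p : F * F => p.1 * p.2) (fun p => f p.1 * g p.2).
Definition delta1 : F -> C := fun z => (z == 1)%:R.
Definition dil (a : F) f : F -> C := fun z => f (z * a).
Definition aug f : C := \sum_(z | z != 0) f z.

Lemma eq_conv f1 f2 g1 g2 : f1 =1 f2 -> g1 =1 g2 -> conv f1 g1 =1 conv f2 g2.
Proof. by move=> ef eg; apply: eq_push => // p; rewrite ef eg. Qed.

Lemma conv_push (I J : finType) (N1 : I -> F) (G1 : I -> C) (N2 : J -> F) (G2 : J -> C) :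
  conv (push N1 G1) (push N2 G2)
  =1 push (fun p : I * J => N1 p.1 * N2 p.2) (fun p => G1 p.1 * G2 p.2).
Proof.
move=> z; rewrite /conv; transitivity (push (fun p : F * F => p.1 * p.2)
  (push (fun p : I * J => (N1 p.1, N2 p.2)) (fun p => G1 p.1 * G2 p.2)) z).
  by apply: eq_push => // -[x y]; rewrite push_pair.
exact: push_comp.
Qed.

Lemma convC f g : conv f g =1 conv g f.
Proof.
have swapK : involutive (fun p : F * F => (p.2, p.1)) by case.
move=> z; rewrite /conv -(push_reindex _ _ (inv_bij swapK)).
by apply: eq_push => p /=; rewrite mulrC.
Qed.

Lemma convA f g h : conv (conv f g) h =1 conv f (conv g h).
Proof.
move=> z; rewrite (eq_conv (frefl (conv f g)) (fun y => esym (push_id h y))).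
rewrite (eq_conv (fun y => esym (push_id f y)) (frefl (conv g h))) !conv_push.
pose assoc (p : (F * F) * F) := (p.1.1, (p.1.2, p.2)).
have assocK : cancel assoc (fun p => ((p.1, p.2.1), p.2.2)) by case=> -[].
have assocVK : cancel (fun p => ((p.1, p.2.1), p.2.2)) assoc by case=> ? [].
rewrite -(push_reindex _ _ (Bijective assocK assocVK)).
by apply: eq_push => p /=; rewrite mulrA.
Qed.

Lemma conv_nz f g v : v != 0 -> conv f g v = \sum_(x | x != 0) f x * g (x^-1 * v).
Proof.
move=> v0; transitivity (\sum_(x | x != 0) \sum_(y | y == x^-1 * v) f x * g y).
  rewrite pair_big_dep; apply: eq_bigl => -[x y] /=.
  have [->|x0] := eqVneq x 0; first by rewrite mul0r eq_sym (negbTE v0).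
  by rewrite (can2_eq (mulKf x0) (mulVKf x0)).
by apply: eq_bigr => x _; rewrite big_pred1_eq.
Qed.

Lemma conv1l f : conv delta1 f =1 f.
Proof.
move=> z; rewrite /conv /push (bigD1 (1, z)) ?mul1r //= /delta1 eqxx mul1r.
rewrite big1 ?addr0 // => -[x y] /andP[/eqP /= xyz]; rewrite xpair_eqE /=.
by case: eqP => [x1|]; rewrite ?mul0r // -xyz x1 mul1r eqxx.
Qed.

Lemma conv0r f : conv f (fun _ => 0) =1 (fun _ => 0).
Proof. by move=> z; rewrite /conv /push big1 // => p _; rewrite mulr0. Qed.

Lemma convBr f g1 g2 :
  conv f (fun y => g1 y - g2 y) =1 (fun z => conv f g1 z - conv f g2 z).
Proof. by move=> z; rewrite -pushB; apply: eq_push => // p; rewrite mulrBr. Qed.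

Lemma convBl f1 f2 g :
  conv (fun y => f1 y - f2 y) g =1 (fun z => conv f1 g z - conv f2 g z).
Proof. by move=> z; rewrite convC convBr !(convC g). Qed.

Lemma convZr f g (k : C) : conv f (fun y => k * g y) =1 (fun z => k * conv f g z).
Proof. by move=> z; rewrite -pushZ; apply: eq_push => // p; rewrite mulrCA. Qed.

Lemma convZl f g (k : C) : conv (fun y => k * f y) g =1 (fun z => k * conv f g z).
Proof. by move=> z; rewrite convC convZr convC. Qed.

Lemma conv_eq_nzr f g1 g2 :
  {in predC1 0, g1 =1 g2} -> {in predC1 0, conv f g1 =1 conv f g2}.
Proof.
move=> eg z; rewrite inE => z0; apply: eq_bigr => -[x y] /eqP /= xyz.
by move: z0; rewrite -xyz mulf_eq0 => /norP[_ y0]; rewrite eg ?inE.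
Qed.

Lemma conv_eq_nzl f1 f2 g :
  {in predC1 0, f1 =1 f2} -> {in predC1 0, conv f1 g =1 conv f2 g}.
Proof. by move=> ef z z0; rewrite convC (conv_eq_nzr _ ef) // convC. Qed.

Lemma dil_push (a : F) f : a != 0 -> dil a f =1 push (fun y => y / a) f.
Proof. by move=> a0 z; rewrite (push_can f (divfK a0) (mulfK a0)). Qed.

Lemma conv_dil (a : F) f g : a != 0 -> conv f (dil a g) =1 dil a (conv f g).
Proof.
move=> a0 z; rewrite dil_push // push_comp.
rewrite (eq_conv (fun y => esym (push_id f y)) (dil_push g a0)) conv_push.
by apply: eq_push => p //=; rewrite mulrA.
Qed.

Lemma aug_push (I : finType) (N : I -> F) (G : I -> C) :
  aug (push N G) = \sum_(i | N i != 0) G i.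
Proof. exact: sum_push. Qed.

Lemma aug_conv f g : aug (conv f g) = aug f * aug g.
Proof.
rewrite aug_push /aug big_distrlr pair_big_dep /=.
by apply: eq_bigl => p; rewrite mulf_eq0 negb_or.
Qed.

Lemma aug_dil (a : F) f : a != 0 -> aug (dil a f) = aug f.
Proof.
move=> a0; rewrite /aug [RHS](reindex_inj (mulIf a0)) /=.
by apply: eq_bigl => z; rewrite mulf_eq0 (negbTE a0) orbF.
Qed.

Lemma aug_delta1 : aug delta1 = 1.
Proof.
rewrite /aug (bigD1 1) ?oner_neq0 //= /delta1 eqxx big1 ?addr0 // => z.
by case/andP=> _ /negbTE ->.
Qed.

Lemma dil_delta1_inj (a b : F) : a != 0 ->
  {in predC1 0, dil a delta1 =1 dil b delta1} -> a = b.
Proof.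
move=> a0 /(_ a^-1); rewrite inE invr_eq0 a0 /dil /delta1 mulVf // eqxx => /(_ isT).
case: (a^-1 * b =P 1) => [ab1 _|_ /eqP]; last by rewrite /= mulr1n mulr0n oner_eq0.
by rewrite -[b](mulVKf a0) ab1 mulr1.
Qed.

Lemma eq_aug f g : f =1 g -> aug f = aug g.
Proof. by move=> e; apply: eq_bigr. Qed.

End MulConvolution.

Section FfunCons.
Variable T : finType.

Definition ffun_cons n (x : T) (f : {ffun 'I_n -> T}) : {ffun 'I_n.+1 -> T} :=
  [ffun i => if unlift ord0 i is Some j then f j else x].

Lemma ffun_cons0 n x (f : {ffun 'I_n -> T}) : ffun_cons x f ord0 = x.
Proof. by rewrite ffunE unlift_none. Qed.

Lemma ffun_consS n x (f : {ffun 'I_n -> T}) j : ffun_cons x f (lift ord0 j) = f j.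
Proof. by rewrite ffunE liftK. Qed.

Lemma ffun_cons_bij n : bijective (fun p : T * {ffun 'I_n -> T} => ffun_cons p.1 p.2).
Proof.
exists (fun f : {ffun 'I_n.+1 -> T} => (f ord0, [ffun j => f (lift ord0 j)])).
  by case=> x f; rewrite ffun_cons0; congr pair; apply/ffunP => j; rewrite ffunE ffun_consS.
move=> f; apply/ffunP => i; rewrite ffunE /=.
by case: unliftP => [j ->|->]; rewrite ?ffunE.
Qed.

Lemma prod_ffun_cons (R : ringType) n x (f : {ffun 'I_n -> T}) (H : T -> R) :
  \prod_(i < n.+1) H (ffun_cons x f i) = H x * \prod_(i < n) H (f i).
Proof.
by rewrite big_ord_recl ffun_cons0; congr (_ * _); apply: eq_bigr => i _; rewrite ffun_consS.
Qed.

End FfunCons.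

Section PushProduct.
Variables (F : finFieldType) (C : comRingType) (T : finType) (N : T -> F) (G : T -> C).

Definition push_prod n : F -> C :=
  push (fun f : {ffun 'I_n -> T} => \prod_i N (f i)) (fun f => \prod_i G (f i)).

Lemma push_prod0 : push_prod 0 =1 delta1 C.
Proof.
move=> y; rewrite /push_prod /push /delta1 eq_sym.
under eq_bigl do rewrite big_ord0.
under eq_bigr do rewrite big_ord0.
case: eqP => _; last by rewrite big_pred0.
by rewrite sumr_const card_ffun card_ord expn0.
Qed.

Lemma push_prodS n : push_prod n.+1 =1 conv (push N G) (push_prod n).
Proof.
move=> y; rewrite /push_prod conv_push -(push_reindex _ _ (ffun_cons_bij T n)).
by apply: eq_push => p /=; rewrite prod_ffun_cons.
Qed.

Lemma aug_push_prod n : aug (push_prod n) = aug (push N G) ^+ n.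
Proof.
elim: n => [|n IHn]; first by rewrite (eq_aug push_prod0) aug_delta1.
by rewrite (eq_aug (push_prodS n)) aug_conv IHn exprS.
Qed.

End PushProduct.

Section CharacterCancellation.
Variables (F L : finFieldType) (C : numDomainType) (N : L -> F) (chi : L -> C).
Hypotheses (NM : {morph N : x y / x * y}) (N1 : N 1 = 1)
  (N_eq0 : forall x, (N x == 0) = (x == 0)).
Hypotheses (chiD : {morph chi : x y / x + y >-> x * y})
  (chi_neq0 : forall x, chi x != 0) (chi_nontriv : exists x, chi x != 1).

Local Notation Q := (#|L|%:R : C).

Definition nzind : L -> C := fun x => (x != 0)%:R.

Lemma Q_neq0 : Q != 0.
Proof. by rewrite pnatr_eq0 -lt0n ltnW ?finNzRing_gt1. Qed.

Lemma chi0 : chi 0 = 1.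
Proof. by apply: (mulfI (chi_neq0 0)); rewrite -chiD addr0 mulr1. Qed.

Lemma sum_chi : \sum_x chi x = 0.
Proof.
have [x0 chix0] := chi_nontriv.
have : \sum_x chi x = chi x0 * \sum_x chi x.
  rewrite mulr_sumr (reindex_inj (addrI x0)) /=.
  by apply: eq_bigr => x _; rewrite chiD.
move/eqP; rewrite -{1}[\sum_x _]mul1r -subr_eq0 -mulrBl mulf_eq0 subr_eq0 eq_sym.
by rewrite (negbTE chix0) => /eqP.
Qed.

Lemma sum_chi_nz w : w != 0 -> \sum_(x | x != 0) chi (w * x) = -1.
Proof.
move=> w0; transitivity (\sum_(x | x != 0) chi x).
  rewrite [RHS](reindex_inj (mulfI w0)) /=.
  by apply: eq_bigl => x; rewrite mulf_eq0 (negbTE w0).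
by have := sum_chi; rewrite (bigD1 0) //= chi0 addrC => /eqP; rewrite addr_eq0 => /eqP.
Qed.

Lemma conv_chi_dual :
  {in predC1 0, conv chi (fun x => chi (- x^-1)) =1 (fun v => Q * delta1 C v - nzind v)}.
Proof.
move=> v; rewrite inE => v0; rewrite conv_nz // /nzind /delta1 v0.
rewrite (eq_bigr (fun x => chi ((1 - v^-1) * x))) => [|x _]; last first.
  by rewrite invfM invrK -chiD mulrBl mul1r [_^-1 * _]mulrC.
have [->|v1] := eqVneq v 1.
  rewrite invr1 subrr; under eq_bigr do rewrite mul0r chi0.
  by rewrite sumr_const cardC1 -subn1 natrB ?mulr1 // ltnW ?finNzRing_gt1.
by rewrite sum_chi_nz ?mulr0 ?sub0r // subr_eq0 eq_sym invr_eq1.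
Qed.

Lemma conv_nzind : {in predC1 0, conv nzind nzind =1 (fun v => (Q - 1) * nzind v)}.
Proof.
move=> v; rewrite inE => v0; rewrite conv_nz // /nzind v0 mulr1.
rewrite (eq_bigr (fun _ => 1)) => [|x x0]; last by rewrite x0 mulf_neq0 ?invr_eq0 ?mulr1.
by rewrite sumr_const cardC1 -subn1 natrB // ltnW ?finNzRing_gt1.
Qed.

Lemma push_conv (G H : L -> C) : push N (conv G H) =1 conv (push N G) (push N H).
Proof.
move=> y; rewrite conv_push push_comp.
by apply: eq_push => // p /=; rewrite NM.
Qed.

Lemma push_eq_nz (G H : L -> C) :
  {in predC1 0, G =1 H} -> {in predC1 0, push N G =1 push N H}.
Proof.
move=> e y; rewrite inE => y0; apply: eq_bigr => t /eqP Nty.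
by rewrite e // inE -N_eq0 Nty.
Qed.

Lemma push_delta1 : push N (delta1 C) =1 delta1 C.
Proof.
move=> y; rewrite /push /delta1 -N1 eq_sym.
have [<-|Ny] := eqVneq (N 1) y.
  by rewrite (bigD1 1) //= eqxx big1 ?addr0 // => t /andP[_ /negbTE ->].
by rewrite big1 // => t /eqP Nt; case: eqP => // t1; case/eqP: Ny; rewrite -t1.
Qed.

Lemma aug_push_char : aug (push N chi) = -1.
Proof.
rewrite aug_push -(sum_chi_nz (oner_neq0 L)).
by apply: eq_big => [t|t _]; rewrite ?N_eq0 ?mul1r.
Qed.

Lemma push_char_cancel (u : F -> C) :
  {in predC1 0, conv (push N chi) u =1 (fun _ => 0)} -> {in predC1 0, u =1 (fun _ => 0)}.
Proof.
move=> gu0; set g := push N chi.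
pose h := push N (fun x => chi (- x^-1)); pose n := push N nzind.
have gh : {in predC1 0, conv g h =1 (fun y => Q * delta1 C y - n y)}.
  move=> y y0; rewrite -push_conv (push_eq_nz conv_chi_dual) //.
  by rewrite pushB pushZ push_delta1.
have nn : {in predC1 0, conv n n =1 (fun y => (Q - 1) * n y)}.
  by move=> y y0; rewrite -push_conv (push_eq_nz conv_nzind) // pushZ.
have Qu : {in predC1 0, forall z, Q * u z = conv n u z}.
  move=> z z0; have : conv h (conv g u) z = 0 by rewrite (conv_eq_nzr _ gu0) // conv0r.
  rewrite -convA (eq_conv (convC h g) (frefl u)) (conv_eq_nzl _ gh) //.
  by rewrite convBl convZl conv1l => /eqP; rewrite subr_eq0 => /eqP.
have nu0 : {in predC1 0, forall z, conv n u z = 0}.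
  move=> z z0; have := conv_eq_nzr n Qu z0.
  rewrite convZr -convA (conv_eq_nzl _ nn) // convZl => /eqP.
  by rewrite -subr_eq0 -mulrBl opprB addrC subrK mul1r => /eqP.
move=> z z0; have := Qu z z0; rewrite nu0 // => /eqP.
by rewrite mulf_eq0 (negbTE Q_neq0) => /eqP.
Qed.

Lemma push_char_dil_cancel (a b : F) (u : F -> C) : a != 0 -> b != 0 ->
  {in predC1 0, dil a (conv (push N chi) u) =1 dil b (conv (push N chi) u)} ->
  {in predC1 0, dil a u =1 dil b u}.
Proof.
move=> a0 b0 e z z0; apply/eqP; rewrite -subr_eq0; apply/eqP; move: z z0.
apply: push_char_cancel => y y0.
by rewrite convBr !conv_dil // e ?subrr.
Qed.

Lemma push_prod_char_dil_cancel n (a b : F) (u : F -> C) : a != 0 -> b != 0 ->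
  {in predC1 0, dil a (conv (push_prod N chi n) u) =1 dil b (conv (push_prod N chi n) u)} ->
  {in predC1 0, dil a u =1 dil b u}.
Proof.
move=> a0 b0; elim: n => [|n IHn] e.
  by move=> z z0; have := e z z0; rewrite /dil !(eq_conv (push_prod0 N chi) (frefl u)) !conv1l.
apply: IHn; apply: push_char_dil_cancel => // z z0.
by have := e z z0; rewrite /dil !(eq_conv (push_prodS N chi n) (frefl u)) !convA.
Qed.

End CharacterCancellation.

Section FiniteFieldExtension.
Variables (F E : finFieldType) (iota : {rmorphism F -> E}).
Local Notation q := #|F|.
Local Notation d := (ext_deg F E).

Definition Fsubspace (S : {set E}) :=
  [/\ 0 \in S, {in S &, forall x y, x + y \in S} & forall a, {in S, forall x, iota a * x \in S}].

Definition add_line (S : {set E}) (e : E) : {set E} :=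
  (fun p : E * F => p.1 + iota p.2 * e) @: setX S [set: F].

Lemma sub_add_line S e : Fsubspace S -> S \subset add_line S e.
Proof.
case=> S0 _ _; apply/subsetP => x xS; apply/imsetP; exists (x, 0).
  by rewrite !inE xS.
by rewrite /= rmorph0 mul0r addr0.
Qed.

Lemma mem_add_line S e : Fsubspace S -> e \in add_line S e.
Proof.
by case=> S0 _ _; apply/imsetP; exists (0, 1); rewrite ?inE ?S0 //= rmorph1 mul1r add0r.
Qed.

Lemma Fsubspace_add_line S e : Fsubspace S -> Fsubspace (add_line S e).
Proof.
move=> SF; have [S0 SD SZ] := SF; split; first exact: (subsetP (sub_add_line e SF)).
  move=> _ _ /imsetP[[x a] /setXP[xS _] ->] /imsetP[[y b] /setXP[yS _] ->].
  apply/imsetP; exists (x + y, a + b); first by rewrite !inE SD.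
  by rewrite /= rmorphD mulrDl addrACA.
move=> c _ /imsetP[[x a] /setXP[xS _] ->]; apply/imsetP.
exists (iota c * x, c * a); first by rewrite !inE SZ.
by rewrite /= rmorphM mulrDr mulrA.
Qed.

Lemma card_add_line S e : Fsubspace S -> e \notin S -> #|add_line S e| = (#|S| * q)%N.
Proof.
move=> [_ SD SZ] eS; rewrite card_in_imset ?cardsX ?cardsT //.
move=> [x a] [y b] /setXP[xS _] /setXP[yS _] /= exy.
have [ab|nab] := eqVneq a b; first by move: exy; rewrite ab => /addIr ->.
case/negP: eS; have ab0 : iota (a - b) != 0 by rewrite fmorph_eq0 subr_eq0.
have -> : e = iota ((a - b)^-1) * (y + iota (-1) * x).
  apply: (mulfI ab0); rewrite fmorphV mulrA divff // mul1r rmorphN1 mulN1r.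
  by rewrite rmorphB mulrBl -[y](addrK (iota b * e)) -exy; ring.
by rewrite SZ // SD ?SZ.
Qed.

Lemma card_ext_pow : exists k, #|E| = (q ^ k)%N.
Proof.
suff ext n S : (#|~: S| <= n)%N -> Fsubspace S -> (exists k, #|S| = (q ^ k)%N) ->
    exists k, #|E| = (q ^ k)%N.
  apply: (ext _ [set 0]) => //; last by exists 0%N; rewrite cards1.
  split=> [|x y|a x]; rewrite !inE //; first by move=> /eqP-> /eqP->; rewrite addr0.
  by move=> /eqP->; rewrite mulr0.
elim: n S => [|n IHn] S.
  rewrite leqn0 cards_eq0 => /eqP SC _ [k Sk]; exists k.
  by rewrite -cardsT -Sk -[S]setCK SC setC0.
move=> cS SF [k Sk]; have [ST|nST] := eqVneq S setT.
  by exists k; rewrite -cardsT -ST.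
have [e _ eS] : exists2 e, e \in setT & e \notin S by apply/subsetPn; rewrite subTset.
apply: (IHn (add_line S e)); last by exists k.+1; rewrite card_add_line // Sk expnSr.
- have /proper_card : ~: add_line S e \proper ~: S.
    by rewrite properC; apply/properP; split; [apply: sub_add_line | exists e; rewrite ?mem_add_line].
  by move=> lt; rewrite -ltnS (leq_trans lt cS).
- exact: Fsubspace_add_line.
Qed.

Lemma card_ext : #|E| = (q ^ d)%N.
Proof. by rewrite /ext_deg; have [k ->] := card_ext_pow; rewrite trunc_expnK ?finNzRing_gt1. Qed.

Lemma ext_deg_gt0 : (0 < d)%N.
Proof. by rewrite lt0n; apply: contraTneq (finNzRing_gt1 E) => d0; rewrite card_ext d0. Qed.

Lemma expf_card_ext (x : E) : x ^+ (q ^ d) = x.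
Proof. by rewrite -card_ext expf_card. Qed.

Lemma pchar_nat_card : [pchar E].-nat q.
Proof.
have [p _ pF] := finPcharP F; have pE := rmorph_pchar iota pF.
by rewrite (card_pprimeChar pF) pnatX pnatE ?(pcharf_prime pE) ?pE.
Qed.

Lemma frobD i : {morph (fun x : E => x ^+ (q ^ i)) : x y / x + y}.
Proof. by move=> x y; apply: exprDn_pchar; rewrite pnatX pchar_nat_card. Qed.

Lemma frob0 i : (0 : E) ^+ (q ^ i) = 0.
Proof. by rewrite expr0n gtn_eqF // expn_gt0 ltnW ?finNzRing_gt1. Qed.

Lemma expf_card_base i (a : F) : a ^+ (q ^ i) = a.
Proof. by elim: i => [|i IHi]; rewrite ?expr1 // expnSr exprM IHi expf_card. Qed.

Lemma fixed_base (y : E) : y ^+ q = y -> exists a, y = iota a.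
Proof.
move=> yq; have := congr1 (fun p => (map_poly iota p).[y]) (finField_genPoly F).
rewrite /= rmorphB /= map_polyXn map_polyX rmorph_prod /= !hornerE yq subrr.
rewrite horner_prod => /esym /eqP; rewrite prodf_seq_eq0 => /hasP[a _].
by rewrite map_polyXsubC /= hornerXsubC subr_eq0 => /eqP ->; exists a.
Qed.

Lemma big_conj_shift (R : Type) (idx : R) (op : Monoid.com_law idx) (f : E -> R) x :
  \big[op/idx]_(i < d) f (x ^+ (q ^ i.+1)) = \big[op/idx]_(i < d) f (x ^+ (q ^ i)).
Proof.
rewrite -(prednK ext_deg_gt0) big_ord_recr big_ord_recl /= prednK ?ext_deg_gt0 //.
by rewrite expf_card_ext expn0 expr1 Monoid.mulmC.
Qed.

Lemma trE_frob (x : E) : trE F x ^+ q = trE F x.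
Proof.
rewrite /trE -[X in _ ^+ X]expn1 (big_morph _ (frobD 1) (frob0 1)).
by under eq_bigr do rewrite -exprM -expnSr; rewrite (big_conj_shift _ id).
Qed.

Lemma nrE_frob (x : E) : nrE F x ^+ q = nrE F x.
Proof.
by rewrite /nrE -prodrXl; under eq_bigr do rewrite -exprM -expnSr; rewrite (big_conj_shift _ id).
Qed.

Lemma lowerF_iota a : lowerF iota (iota a) = a.
Proof.
rewrite /lowerF; case: pickP => [x /eqP/fmorph_inj -> //|/(_ a)].
by rewrite eqxx.
Qed.

Lemma Tr_iota x : iota (Tr iota x) = trE F x.
Proof. by have [a ea] := fixed_base (trE_frob x); rewrite /Tr ea lowerF_iota. Qed.

Lemma Nr_iota x : iota (Nr iota x) = nrE F x.
Proof. by have [a ea] := fixed_base (nrE_frob x); rewrite /Nr ea lowerF_iota. Qed.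

Lemma TrD : {morph Tr iota : x y / x + y}.
Proof.
move=> x y; apply: (fmorph_inj iota); rewrite rmorphD !Tr_iota /trE -big_split /=.
by apply: eq_bigr => i _; rewrite frobD.
Qed.

Lemma Tr0 : Tr iota 0 = 0.
Proof. by apply: (addrI (Tr iota 0)); rewrite -TrD !addr0. Qed.

Lemma Tr_scale c x : Tr iota (iota c * x) = c * Tr iota x.
Proof.
apply: (fmorph_inj iota); rewrite rmorphM !Tr_iota /trE mulr_sumr.
by apply: eq_bigr => i _; rewrite exprMn -rmorphXn expf_card_base.
Qed.

Lemma NrM : {morph Nr iota : x y / x * y}.
Proof.
move=> x y; apply: (fmorph_inj iota); rewrite rmorphM !Nr_iota /nrE -big_split /=.
by apply: eq_bigr => i _; rewrite exprMn.
Qed.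

Lemma Nr1 : Nr iota 1 = 1.
Proof.
by apply: (fmorph_inj iota); rewrite rmorph1 Nr_iota /nrE big1 // => i _; rewrite expr1n.
Qed.

Lemma Nr_eq0 x : (Nr iota x == 0) = (x == 0).
Proof.
rewrite -(fmorph_eq0 iota) Nr_iota /nrE prodf_seq_eq0.
apply/hasP/idP => [[i _ /=]|x0]; first by rewrite expf_eq0 => /andP[].
exists (Ordinal ext_deg_gt0); first by rewrite mem_index_enum.
by rewrite /= expf_eq0 x0 expn_gt0 ltnW ?finNzRing_gt1.
Qed.

Lemma size_trace_poly : size (\sum_(i < d) 'X^(q ^ i) : {poly E}) = (q ^ d.-1).+1.
Proof.
rewrite -(prednK ext_deg_gt0) big_ord_recr /= addrC size_polyDl size_polyXn //.
rewrite ltnS; apply/leq_sizeP => j le_j; rewrite coef_sum big1 // => i _.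
rewrite coefXn; case: eqP => // ji; move: le_j; rewrite ji.
by rewrite leqNgt ltn_exp2l ?finNzRing_gt1 ?ltn_ord.
Qed.

Lemma Tr_nz : exists x, Tr iota x != 0.
Proof.
have [x Trx|Tr_all0] := pickP (fun x => Tr iota x != 0); first by exists x.
pose P : {poly E} := \sum_(i < d) 'X^(q ^ i).
have P0 : P != 0 by rewrite -size_poly_eq0 size_trace_poly.
have rootP : all (root P) (enum E).
  apply/allP => x _; rewrite /root horner_sum.
  under eq_bigr do rewrite hornerXn.
  by rewrite -[X in X == 0]/(trE F x) -Tr_iota; have /negbFE/eqP -> := Tr_all0 x; rewrite rmorph0.
have := max_poly_roots P0 rootP (enum_uniq E).
rewrite size_trace_poly -cardE card_ext ltnS leqNgt ltn_exp2l ?finNzRing_gt1 //.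
by rewrite ltn_predL ext_deg_gt0.
Qed.

End FiniteFieldExtension.

Section Kloosterman.
Variables (F E : finFieldType) (iota : {rmorphism F -> E}) (C : numClosedFieldType)
  (psi : F -> C).
Hypotheses (psiD : {morph psi : x y / x + y >-> x * y}) (psi_neq0 : forall x, psi x != 0)
  (psi_nontriv : exists x, psi x != 1).

Lemma char_TrD : {morph (fun x => psi (Tr iota x)) : x y / x + y >-> x * y}.
Proof. by move=> x y; rewrite TrD psiD. Qed.

Lemma char_Tr_nontriv : exists x, psi (Tr iota x) != 1.
Proof.
have [s0 psi_s0] := psi_nontriv; have [x Trx] := Tr_nz iota.
by exists (iota (s0 / Tr iota x) * x); rewrite Tr_scale divfK.
Qed.

Lemma KlE n m : Kl iota n m psi =1
  conv (push_prod (Nr iota) (fun x => psi (Tr iota x)) n) (push_prod id psi m).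
Proof.
move=> a; rewrite conv_push /Kl /push pair_big_dep.
apply: eq_big => [[t s]|[t s] _] //=.
by rewrite (big_morph _ (TrD iota) (Tr0 iota)) !(big_morph _ psiD (chi0 psiD psi_neq0)).
Qed.

Lemma aug_Kl n m : aug (Kl iota n m psi) = (-1) ^+ (n + m).
Proof.
rewrite (eq_aug (KlE n m)) aug_conv !aug_push_prod exprD.
rewrite (aug_push_char (Nr_eq0 iota) char_TrD _ char_Tr_nontriv) //.
by rewrite (aug_push_char (N := id)).
Qed.

Lemma Kl_dil_inj n m (a b : F) : a != 0 -> b != 0 ->
  {in predC1 0, dil a (Kl iota n m psi) =1 dil b (Kl iota n m psi)} -> a = b.
Proof.
move=> a0 b0 Kl_ab; pose PF := push_prod id psi m.
have PF_ab : {in predC1 0, dil a PF =1 dil b PF}.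
  apply: (push_prod_char_dil_cancel (NrM iota) (Nr1 iota) (Nr_eq0 iota) char_TrD
    (fun _ => psi_neq0 _) char_Tr_nontriv (n := n) a0 b0) => t t0.
  by rewrite /dil -!KlE; apply: Kl_ab.
apply: (dil_delta1_inj a0).
apply: (push_prod_char_dil_cancel (N := id) (n := m) (fun _ _ => erefl) erefl
  (fun _ => erefl) psiD psi_neq0 psi_nontriv a0 b0) => t t0.
by rewrite /dil !(convC PF) !conv1l; apply: PF_ab.
Qed.

End Kloosterman.

Theorem propositionA7 (F E : finFieldType) (iota : {rmorphism F -> E})
  (C : numClosedFieldType) (psi : F -> C) (n m : nat) (a b : F) (c : C) :
  add_char psi -> nontrivial_char psi ->
  a != 0 -> b != 0 -> c != 0 ->
  (forall t : F, t != 0 ->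
     Kl iota n m psi (t * a) = c * Kl iota n m psi (t * b)) ->
  c = 1 /\ a = b.
Proof.
move=> [psiD psi_neq0] psi_nontriv a0 b0 _ Kl_ab.
have c1 : c = 1.
  have : aug (dil a (Kl iota n m psi)) = c * aug (dil b (Kl iota n m psi)).
    by rewrite /aug mulr_sumr; apply: eq_bigr => t t0; rewrite /dil Kl_ab.
  rewrite !aug_dil // aug_Kl // -{1}[_ ^+ _]mul1r.
  by move/(mulIf (negbT (signr_eq0 _ _))).
split=> //; apply: (Kl_dil_inj (iota := iota) (n := n) (m := m) psiD psi_neq0 psi_nontriv a0 b0).
by move=> t; rewrite inE => t0; rewrite /dil Kl_ab // c1 mul1r.
Qed.
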